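(* Let $V$ be as in the setup below, $V^+=\{v\in V:(N^+\otimes\mathbb C_q)\cdot v=0\}$, $h\in\dot{\mathfrak h}$ and $a\in\operatorname{rad}f$. If there exists $v\in V^+$ with $(h\otimes t^a)\cdot v\neq0$, then $(h\otimes t^a)\cdot w\neq0$ for all nonzero $w\in V^+$.
   Context: Fix integers $n\ge2$, $d\ge2$. Let $q=(q_{ij})_{1\le i,j\le n}$ with $q_{ij}\in\mathbb C^\times$ roots of unity, $q_{ii}=1$, $q_{ij}=q_{ji}^{-1}$. The rational quantum torus $\mathbb C_q$ is generated by $t_1^{\pm1},\dots,t_n^{\pm1}$ with $t_it_i^{-1}=t_i^{-1}t_i=1$, $t_it_j=q_{ij}t_jt_i$; $t^a=t_1^{a_1}\cdots t_n^{a_n}$, $t^at^b=f(a,b)t^bt^a$ with $f(a,b)=\prod_{i,j}q_{ji}^{a_jb_i}$, $\operatorname{rad}f=\{a: f(a,b)=1\ \forall b\}$; $Z(\mathbb C_q)$ is spanned by $t^a$, $a\in\operatorname{rad}f$. $\tau(d,q)=\mathfrak{sl}_d(\mathbb C_q)$: $d\times d$ matrices over $\mathbb C_q$ with trace in $[\mathbb C_q,\mathbb C_q]$, commutator bracket. With $J\subset\mathbb C_q\otimes\mathbb C_q$ spanned by $x\otimes y+y\otimes x$, $xy\otimes z+yz\otimes x+zx\otimes y$, let $\langle t^a,t^b\rangle$ ($a+b\in\operatorname{rad}f$) be the image of $t^a\otimes t^b$ modulo $J$, $HC_1(\mathbb C_q)$ their span; $\tilde\tau(d,q)=\tau(d,q)\oplus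 HC_1(\mathbb C_q)$ with $HC_1$ central and $[X\otimes t^a,Y\otimes t^b]=(XY\otimes t^at^b-YX\otimes t^bt^a)+\mathrm{Tr}(XY)\langle t^a,t^b\rangle$ if $a+b\in\operatorname{rad}f$ (no last term otherwise); $\hat\tau(d,q)=\tilde\tau(d,q)\oplus D$, $D=\bigoplus_i\mathbb Cd_i$, $[d_i,d_j]=0$, $[d_i,X\otimes t^a]=a_iX\otimes t^a$, $[d_i,\langle t^a,t^b\rangle]=(a_i+b_i)\langle t^a,t^b\rangle$. $\dot{\mathfrak h}$ = trace-zero diagonal matrices. Integrable: direct sum of weight spaces for $\mathfrak h=\dot{\mathfrak h}\oplus\bigoplus\mathbb C\langle t_i,t_i^{-1}\rangle\oplus\bigoplus\mathbb Cd_i$ and each $x_\alpha\otimes t^m$ ($x_\alpha$ a root vector of $\mathfrak{sl}_d(\mathbb C)$) acts locally nilpotently. Setup: $V$ is an irreducible integrable $\hat\tau(d,q)$-module with finite-dimensional weight spaces on which $HC_1(\mathbb C_q)$ acts trivially, regarded as a module over $(\mathfrak{gl}_d(\mathbb C)\otimes\mathbb C_q)\oplus D$ via $\mathfrak{gl}_d(\mathbb C)\otimes\mathbb C_q=\mathfrak{sl}_d(\mathbb C_q)\oplus(I_d\otimes Z(\mathbb C_q))$ with $I_d\otimes Z(\mathbb C_q)$ acting by zero. $N^+$ = strictly upper triangular matrices. *)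

From HB Require Import structures.
From mathcomp Require Import all_boot all_order all_algebra.
From mathcomp Require Import complex reals.
Set Implicit Arguments. Unset Strict Implicit. Unset Printing Implicit Defensive.
Import Order.TTheory GRing.Theory Num.Theory.
Local Open Scope ring_scope.

Section QT.
Variables (C : fieldType) (n d : nat).

Definition mi (a : 'rV[int]_n) (i : 'I_n) : int := a ord0 i.

Definition qtorus_param (q : 'I_n -> 'I_n -> C) : Prop :=
  (forall i j, exists k : nat, (0 < k)%N /\ q i j ^+ k = 1) /\
  (forall i, q i i = 1) /\ (forall i j, q i j = (q j i)^-1).

(* t^a t^b = sigma(a,b) t^(a+b)  with t^a = t_1^{a_1} ... t_n^{a_n} *)
Definition qsigma (q : 'I_n -> 'I_n -> C) (a b : 'rV[int]_n) : C :=
  \prod_(i < n) \prod_(j < n | (j < i)%N) q i j ^ (mi a i * mi b j).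

(* t^a t^b = f(a,b) t^b t^a,  f(a,b) = prod_{i,j} q_ji^{a_j b_i} *)
Definition qf (q : 'I_n -> 'I_n -> C) (a b : 'rV[int]_n) : C :=
  \prod_(i < n) \prod_(j < n) q j i ^ (mi a j * mi b i).

Definition in_rad (q : 'I_n -> 'I_n -> C) (a : 'rV[int]_n) : Prop :=
  forall b, qf q a b = 1.

Definition in_hdot (h : 'M[C]_d) : Prop := is_diag_mx h /\ \tr h = 0.

Variable V : lmodType C.

(* An action of (gl_d(C) (x) C_q) (+) D on V:  rho X a  is the operator of
   X (x) t^a, dop i the operator of d_i.  Lie-module axioms written on the
   basis { X (x) t^a } (rho is linear in X), with I_d (x) Z(C_q) acting by 0. *)
Definition glq_module (q : 'I_n -> 'I_n -> C)
    (rho : 'M[C]_d -> 'rV[int]_n -> V -> V) (dop : 'I_n -> V -> V) : Prop :=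
  (forall X a c u w, rho X a (c *: u + w) = c *: rho X a u + rho X a w) /\
  (forall i c u w, dop i (c *: u + w) = c *: dop i u + dop i w) /\
  (forall X Y a c v, rho (c *: X + Y) a v = c *: rho X a v + rho Y a v) /\
  (forall X Y a b v,
      rho X a (rho Y b v) - rho Y b (rho X a v) =
      rho (qsigma q a b *: (X *m Y) - qsigma q b a *: (Y *m X)) (a + b) v) /\
  (forall i j v, dop i (dop j v) = dop j (dop i v)) /\
  (forall i X a v, dop i (rho X a v) - rho X a (dop i v)
                   = (mi a i)%:~R *: rho X a v) /\
  (forall a v, in_rad q a -> rho 1%:M a v = 0).

Definition submodule (rho : 'M[C]_d -> 'rV[int]_n -> V -> V)
    (dop : 'I_n -> V -> V) (W : V -> Prop) : Prop :=
  W 0 /\ (forall c u w, W u -> W w -> W (c *: u + w)) /\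
  (forall X a v, W v -> W (rho X a v)) /\ (forall i v, W v -> W (dop i v)).

Definition irreducible (rho : 'M[C]_d -> 'rV[int]_n -> V -> V)
    (dop : 'I_n -> V -> V) : Prop :=
  (exists v : V, v != 0) /\
  forall W, submodule rho dop W -> (forall v, W v -> v = 0) \/ (forall v, W v).

(* Weight space for the weight (lam on \dot h, del on D).  The central
   elements <t_i, t_i^{-1}> of h act by 0 since HC_1 acts trivially. *)
Definition weight_space (rho : 'M[C]_d -> 'rV[int]_n -> V -> V)
    (dop : 'I_n -> V -> V) (lam : 'M[C]_d -> C) (del : 'I_n -> C) (v : V)
    : Prop :=
  (forall h, in_hdot h -> rho h 0 v = lam h *: v) /\
  (forall i, dop i v = del i *: v).

Definition is_weight_vector rho dop (v : V) : Prop :=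
  exists lam del, weight_space rho dop lam del v.

Definition fin_dim_sub (W : V -> Prop) : Prop :=
  exists s : seq V, forall v, W v ->
    exists c : 'I_(size s) -> C, v = \sum_(k < size s) c k *: s`_k.

Definition integrable_fd (rho : 'M[C]_d -> 'rV[int]_n -> V -> V)
    (dop : 'I_n -> V -> V) : Prop :=
  (* V is the (necessarily direct) sum of its weight spaces *)
  (forall v : V, exists s : seq V,
      (forall w, w \in s -> is_weight_vector rho dop w) /\
      v = \sum_(w <- s) w) /\
  (forall lam del, fin_dim_sub (weight_space rho dop lam del)) /\
  (forall (i j : 'I_d) m v, i != j ->
      exists k : nat, iter k (rho (delta_mx i j) m) v = 0).

Definition Vplus (rho : 'M[C]_d -> 'rV[int]_n -> V -> V) (v : V) : Prop :=
  forall (i j : 'I_d) m, (i < j)%N -> rho (delta_mx i j) m v = 0.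

End QT.

(* Let T = h (x) t^a and suppose T w = 0 for some nonzero w in V^+ while T v <> 0 for
   some v in V^+.  Because a lies in rad f, the cocycle sigma(a, -) is symmetric, so T
   commutes with the "Cartan part" (diagonal matrices (x) C_q, and D) and T maps V^+ into
   itself.  For nonzero u in V^+, irreducibility makes V the span of the lowering operators
   E_ij (x) t^b (j < i) applied to the Cartan span of u.  Fix the traceless regular
   element H = diag(c, c - 1, ..., c - d + 1): every lowering operator moves H-eigenvalues
   down by a positive integer.  Expanding v from w, and using T w = 0, shows that T v only
   has H-eigenvalues at least one step below those of w; expanding w from T v then pushes
   the H-eigenvalues of w one step below themselves.  Iterating, the finitely many
   H-eigenvalues of w lie arbitrarily far below themselves, so w = 0. *)

From HB Require Import structures.
From mathcomp Require Import all_boot all_order all_algebra.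
From mathcomp Require Import complex reals.
From Stdlib Require Import Classical_Prop.
Import Order.TTheory GRing.Theory Num.Theory.
Local Open Scope ring_scope.

Set Implicit Arguments. Unset Strict Implicit. Unset Printing Implicit Defensive.

Section MatrixUnits.
Variables (R : comPzRingType) (d : nat).
Implicit Types (D : 'M[R]_d) (i j k : 'I_d).

Lemma diag_mul_delta D i j : is_diag_mx D -> D *m delta_mx i j = D i i *: delta_mx i j.
Proof.
move=> /diag_mxP[r ->]; rewrite mul_diag_mx; apply/matrixP=> k l; rewrite !mxE.
by case: (eqVneq k i) => [->|ne]; rewrite ?eqxx ?mulr1n ?mulr0n ?mulr0 ?(negPf ne).
Qed.

Lemma delta_mul_diag D i j : is_diag_mx D -> delta_mx i j *m D = D j j *: delta_mx i j.
Proof.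
move=> /diag_mxP[r ->]; rewrite mul_mx_diag; apply/matrixP=> k l; rewrite !mxE.
by case: (eqVneq l j) => [->|ne];
  rewrite ?eqxx ?(negPf ne) ?andbT ?andbF ?mulr1n ?mul0r ?mulr0 // mulrC.
Qed.

Lemma delta_mx_is_diag k : is_diag_mx (delta_mx k k : 'M[R]_d).
Proof.
apply/is_diag_mxP => i j; rewrite mxE.
by case: (i =P k) => [->|//]; case: (j =P k) => [->|//]; rewrite eqxx.
Qed.

End MatrixUnits.

Section QuantumTorusCocycle.
Variables (K : fieldType) (n : nat) (q : 'I_n -> 'I_n -> K).
Implicit Types a b : 'rV[int]_n.

Lemma qsigma0l b : qsigma q 0 b = 1.
Proof.
by rewrite /qsigma big1 // => i _; rewrite big1 // => j _; rewrite /mi mxE mul0r expr0z.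
Qed.

Lemma qsigma0r a : qsigma q a 0 = 1.
Proof.
by rewrite /qsigma big1 // => i _; rewrite big1 // => j _; rewrite /mi mxE mulr0 expr0z.
Qed.

Hypothesis hq : qtorus_param q.

Lemma qtorus_param_neq0 i j : q i j != 0.
Proof.
have [k [k_gt0 qk]] := hq.1 i j; apply/eqP => qij0.
by move: qk; rewrite qij0 expr0n eqn0Ngt k_gt0 => /eqP; rewrite eq_sym oner_eq0.
Qed.

Lemma qf_mul_qsigma a b : qf q a b * qsigma q b a = qsigma q a b.
Proof.
have [_ [q_diag q_inv]] := hq.
pose P i j := q i j ^ (mi a i * mi b j).
have qfE : qf q a b = \prod_i \prod_j P i j by rewrite /qf exchange_big.
have qsE : qsigma q b a =
    \prod_(i < n) \prod_(j < n | (i < j)%N) (q i j)^-1 ^ (mi a i * mi b j).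
  rewrite /qsigma (exchange_big_dep xpredT) //=; apply: eq_bigr => i _.
  by apply: eq_bigr => j _; rewrite q_inv mulrC.
rewrite qfE qsE -big_split; apply: eq_bigr => i _ /=.
rewrite (bigID (fun j : 'I_n => (j < i)%N)) /= -mulrA -[RHS]mulr1; congr (_ * _).
rewrite (bigD1 i) ?ltnn //= /P q_diag exp1rz mul1r.
rewrite (eq_bigl (fun j : 'I_n => (i < j)%N)) => [|j]; last first.
  by rewrite -leqNgt andbC (eq_sym j) -ltn_neqAle.
rewrite -big_split big1 // => j _ /=.
by rewrite -expfzMl mulfV ?qtorus_param_neq0 // exp1rz.
Qed.

Lemma qsigma_rad_sym a b : in_rad q a -> qsigma q a b = qsigma q b a.
Proof. by move=> ha; rewrite -qf_mul_qsigma ha mul1r. Qed.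

End QuantumTorusCocycle.

Fixpoint eigensum (K : fieldType) (V : lmodType K) (T : V -> V) (fs : seq K) (x : V)
    : Prop :=
  if fs is f :: fs' then exists2 z, T z = f *: z & eigensum T fs' (x - z) else x = 0.

Definition in_eigenspaces (K : fieldType) (V : lmodType K) (T : V -> V) (P : K -> Prop)
    (x : V) : Prop :=
  exists2 fs, eigensum T fs x & {in fs, forall f, P f}.

Section EigenSums.
Variables (K : fieldType) (V : lmodType K) (T : {linear V -> V}).
Local Notation eigensum := (eigensum T).
Local Notation in_eigenspaces := (in_eigenspaces T).

Lemma eigensum_cat fs gs c x y :
  eigensum fs x -> eigensum gs y -> eigensum (fs ++ gs) (c *: x + y).
Proof.
elim: fs x => [|f fs IH] x /= => [-> | [z Tz sz]] sy; first by rewrite scaler0 add0r.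
exists (c *: z); first by rewrite (linearZ_LR T) Tz !scalerA mulrC.
by rewrite addrAC -scalerBr; apply: IH.
Qed.

Lemma eigensum_map (S : {linear V -> V}) (g : K -> K) fs x :
  (forall f z, T z = f *: z -> T (S z) = g f *: S z) ->
  eigensum fs x -> eigensum (map g fs) (S x).
Proof.
move=> Sg; elim: fs x => [|f fs IH] x /= => [-> | [z Tz sz]]; first exact: linear0.
by exists (S z); [exact: Sg | rewrite -(linearB S); exact: IH].
Qed.

Lemma eigensum_shift e fs x : eigensum fs x -> eigensum fs (T x - e *: x).
Proof.
elim: fs x => [|f fs IH] x /= => [-> | [z Tz sz]]; first by rewrite linear0 scaler0 subrr.
exists (T z - e *: z); first by rewrite Tz -scalerBl (linearZ_LR T) Tz !scalerA mulrC.
suff -> : T x - e *: x - (T z - e *: z) = T (x - z) - e *: (x - z) by apply: IH.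
by rewrite (linearB T) scalerBr !opprD !opprK addrACA.
Qed.

Lemma eigensum_eigenvector f0 es x :
  T x = f0 *: x -> eigensum es x -> f0 \notin es -> x = 0.
Proof.
elim: es x => [|e es IH] x Tx //= [z Tz sz]; rewrite inE negb_or => /andP[f0e f0es].
have : (f0 - e) *: x = 0.
  apply: IH f0es; first by rewrite (linearZ_LR T) Tx !scalerA mulrC.
  have -> : (f0 - e) *: x = T (x - z) - e *: (x - z).
    by rewrite (linearB T) Tx Tz scalerBl !scalerBr opprB addrA subrK.
  exact: eigensum_shift.
by move/eqP; rewrite scaler_eq0 subr_eq0 (negPf f0e) => /eqP.
Qed.

Lemma eigensum_disjoint fs es x :
  eigensum fs x -> eigensum es x -> {in fs, forall f, f \notin es} -> x = 0.
Proof.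
elim: fs es x => [|f fs IH] es x /= => [-> // | [z Tz sz] se fs_es].
have Tx : T x = f *: x.
  apply/eqP; rewrite -subr_eq0; apply/eqP; apply: (IH es).
  - have -> : T x - f *: x = T (x - z) - f *: (x - z).
      by rewrite (linearB T) Tz scalerBr opprB addrA subrK.
    exact: eigensum_shift.
  - exact: eigensum_shift.
  - by move=> g g_fs; apply: fs_es; rewrite inE g_fs orbT.
by apply: eigensum_eigenvector Tx se _; apply: fs_es; rewrite inE eqxx.
Qed.

Lemma in_eigenspaces0 P : in_eigenspaces P 0.
Proof. by exists [::]. Qed.

Lemma in_eigenspaces_lin P c x y :
  in_eigenspaces P x -> in_eigenspaces P y -> in_eigenspaces P (c *: x + y).
Proof.
move=> [fs sx Pfs] [gs sy Pgs]; exists (fs ++ gs); first exact: eigensum_cat.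
by move=> f; rewrite mem_cat => /orP[]; [apply: Pfs | apply: Pgs].
Qed.

Lemma in_eigenspacesW (P Q : K -> Prop) x :
  (forall f, P f -> Q f) -> in_eigenspaces P x -> in_eigenspaces Q x.
Proof. by move=> PQ [fs sx Pfs]; exists fs => // f /Pfs/PQ. Qed.

Lemma in_eigenspaces_map (S : {linear V -> V}) (g : K -> K) (P Q : K -> Prop) x :
  (forall f z, T z = f *: z -> T (S z) = g f *: S z) -> (forall f, P f -> Q (g f)) ->
  in_eigenspaces P x -> in_eigenspaces Q (S x).
Proof.
move=> Sg PQ [fs sx Pfs]; exists (map g fs); first exact: eigensum_map.
by move=> _ /mapP[f /Pfs Pf ->]; apply: PQ.
Qed.

End EigenSums.

Section NatShifts.
Variable K : numDomainType.
Implicit Types (ys zs : seq K) (f : K).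

Definition below ys (k : nat) f : Prop := exists2 m, (k <= m)%N & f + m%:R \in ys.

Lemma below_mem ys f : f \in ys -> below ys 0 f.
Proof. by exists 0%N; rewrite ?addr0. Qed.

Lemma belowW ys k k' f : (k <= k')%N -> below ys k' f -> below ys k f.
Proof. by move=> kk' [m k'm fm]; exists m => //; apply: leq_trans k'm. Qed.

Lemma below_subn ys k s f : below ys k f -> below ys (k + s) (f - s%:R).
Proof.
move=> [m km fm]; exists (m + s)%N; first by rewrite leq_add2r.
by rewrite natrD [_ + s%:R]addrC addrA subrK.
Qed.

Lemma natr_eventually_notin zs : exists k, forall m, (k <= m)%N -> m%:R \notin zs.
Proof.
elim: zs => [|z zs [k kzs]]; first by exists 0%N.
have [[m0 m0z]|no_m] := classic (exists m0, m0%:R = z).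
  exists (maxn k m0.+1) => m; rewrite geq_max => /andP[km m0m].
  rewrite inE negb_or kzs // andbT -m0z eqr_nat.
  by rewrite neq_ltn m0m orbT.
exists k => m km; rewrite inE negb_or kzs // andbT.
by apply/eqP => mz; apply: no_m; exists m.
Qed.

Lemma below_eventually_notin ys : exists k, forall f, below ys k f -> f \notin ys.
Proof.
have [k kP] := natr_eventually_notin [seq y' - y | y <- ys, y' <- ys].
exists k => f [m km fm]; apply/negP => fys; move/negP: (kP m km); apply.
by apply/allpairsP; exists (f, f + m%:R); rewrite /= addrAC subrr add0r.
Qed.

End NatShifts.

Section RegularDiagonal.
Variables (C : numFieldType) (d : nat).

Definition hreg : 'M[C]_d :=
  diag_mx (\row_(k < d) ((\sum_(l < d) (l : nat)%:R) / d%:R - (k : nat)%:R)).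

Lemma hreg_diag : is_diag_mx hreg.
Proof. exact: diag_mx_is_diag. Qed.

Lemma hreg_hdot : (0 < d)%N -> in_hdot hreg.
Proof.
move=> d_gt0; split; first exact: hreg_diag.
rewrite mxtrace_diag; under eq_bigr do rewrite mxE.
rewrite sumrB sumr_const card_ord -[_ / _ *+ _]mulr_natr divfK ?subrr //.
by rewrite pnatr_eq0 -lt0n.
Qed.

Lemma hreg_root i j : hreg i i - hreg j j = (j : nat)%:R - (i : nat)%:R.
Proof. by rewrite !mxE !eqxx !mulr1n opprB addrC addrA subrK. Qed.

End RegularDiagonal.
Arguments hreg {C d}.

Section GlqModule.
Variables (C : numFieldType) (n d : nat) (q : 'I_n -> 'I_n -> C) (V : lmodType C).
Variables (rho : 'M[C]_d -> 'rV[int]_n -> V -> V) (dop : 'I_n -> V -> V).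
Hypothesis hmod : glq_module q rho dop.

Lemma rho_linear X a : linear (rho X a).
Proof. by case: hmod => rho_lin _ c u w; apply: rho_lin. Qed.

Lemma dop_linear i : linear (dop i).
Proof. by case: hmod => _ [dop_lin _] c u w; apply: dop_lin. Qed.

Lemma rho_linear_mx a v : linear (fun X => rho X a v).
Proof. by case: hmod => _ [_ [rho_lin _]] c X Y; apply: rho_lin. Qed.

HB.instance Definition _ X a :=
  GRing.isLinear.Build C V V *:%R (rho X a) (rho_linear X a).
HB.instance Definition _ i := GRing.isLinear.Build C V V *:%R (dop i) (dop_linear i).

Lemma rho_mxZ c X a v : rho (c *: X) a v = c *: rho X a v.
Proof. exact: (scalable_linear (rho_linear_mx a v)). Qed.

Lemma rho_commutator X Y a b v :
  rho X a (rho Y b v) = rho Y b (rho X a v)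
    + rho (qsigma q a b *: (X *m Y) - qsigma q b a *: (Y *m X)) (a + b) v.
Proof. by case: hmod => _ [_ [_ [rho_comm _]]]; rewrite -rho_comm addrC subrK. Qed.

Lemma dop_rho i X a v :
  dop i (rho X a v) = rho X a (dop i v) + (mi a i)%:~R *: rho X a v.
Proof. by case: hmod => _ [_ [_ [_ [_ [dop_comm _]]]]]; rewrite -dop_comm addrC subrK. Qed.

Lemma rho_diag_delta D a b i j v : is_diag_mx D ->
  rho D a (rho (delta_mx i j) b v) = rho (delta_mx i j) b (rho D a v)
    + (qsigma q a b * D i i - qsigma q b a * D j j) *: rho (delta_mx i j) (a + b) v.
Proof.
move=> D_diag; rewrite rho_commutator diag_mul_delta // delta_mul_diag //.
by rewrite !scalerA -scalerBl rho_mxZ.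
Qed.

Lemma rho_delta_eigen D i j b f z : is_diag_mx D -> rho D 0 z = f *: z ->
  rho D 0 (rho (delta_mx i j) b z) = (f + (D i i - D j j)) *: rho (delta_mx i j) b z.
Proof.
move=> D_diag Dz; rewrite rho_diag_delta // Dz qsigma0l qsigma0r !mul1r add0r.
by rewrite (linearZ_LR (rho _ b)) -scalerDl.
Qed.

Lemma dop_eigen X k f z : rho X 0 z = f *: z -> rho X 0 (dop k z) = f *: dop k z.
Proof.
move=> Xz; have := dop_rho k X 0 z.
by rewrite Xz (linearZ_LR (dop k)) /mi mxE scale0r addr0 => ->.
Qed.

Lemma Vplus_rho_diag D a v : is_diag_mx D -> Vplus rho v -> Vplus rho (rho D a v).
Proof.
move=> D_diag v_plus i j m ij; have := rho_diag_delta a m i j v D_diag.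
by rewrite !v_plus // linear0 scaler0 addr0 => <-.
Qed.

Lemma integrable_eigensum h : integrable_fd rho dop -> in_hdot h ->
  forall x, exists ys, eigensum (rho h 0) ys x.
Proof.
move=> [weight_sum _] hh x; have [s [s_weight ->]] := weight_sum x.
elim: s s_weight => [|z s IH] s_weight; first by exists [::]; rewrite big_nil.
have [lam [del [z_weight _]]] := s_weight z (mem_head _ _).
have [ys s_ys] := IH (fun y y_s => s_weight y (mem_behead (s := z :: s) y_s)).
exists (lam h :: ys); rewrite big_cons.
by exists z; [exact: z_weight | rewrite addrC addKr].
Qed.

Inductive cartan_span (u : V) : V -> Prop :=
| cartan_span_gen : cartan_span u u
| cartan_span_lin c x y :
    cartan_span u x -> cartan_span u y -> cartan_span u (c *: x + y)
| cartan_span_rho k b x : cartan_span u x -> cartan_span u (rho (delta_mx k k) b x)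
| cartan_span_dop k x : cartan_span u x -> cartan_span u (dop k x).

(* In the paper's notation, [lower_span u] is U(N^- (x) C_q) U(diag (x) C_q + D) u; by
   PBW it is the submodule generated by u when u is in V^+. *)
Inductive lower_span (u : V) : V -> Prop :=
| lower_span_cartan x : cartan_span u x -> lower_span u x
| lower_span_rho (i j : 'I_d) b x :
    (j < i)%N -> lower_span u x -> lower_span u (rho (delta_mx i j) b x)
| lower_span_lin c x y :
    lower_span u x -> lower_span u y -> lower_span u (c *: x + y).

Lemma lower_span0 u : lower_span u 0.
Proof.
have u_u := lower_span_cartan (cartan_span_gen u).
by have := lower_span_lin (-1) u_u u_u; rewrite scaleN1r addNr.
Qed.

Lemma lower_spanD u x y : lower_span u x -> lower_span u y -> lower_span u (x + y).
Proof. by move=> ux uy; rewrite -[x]scale1r; apply: lower_span_lin. Qed.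

Lemma lower_spanZ u c x : lower_span u x -> lower_span u (c *: x).
Proof. by move=> ux; rewrite -[_ *: _]addr0; apply: lower_span_lin ux (lower_span0 u). Qed.

Lemma cartan_span_Vplus u x : Vplus rho u -> cartan_span u x -> Vplus rho x.
Proof.
move=> u_plus.
elim=> {x} // [c x y _ x_plus _ y_plus | k b x _ x_plus | k x _ x_plus] i j m ij.
- by rewrite linearP /= x_plus // y_plus // scaler0 addr0.
- exact: (Vplus_rho_diag b (delta_mx_is_diag _ k) x_plus).
- by have := dop_rho k (delta_mx i j) m x; rewrite x_plus // linear0 scaler0 addr0 => <-.
Qed.

Lemma lower_span_rho_cartan u X a x :
  Vplus rho u -> cartan_span u x -> lower_span u (rho X a x).
Proof.
move=> u_plus ux.
pose F : {linear 'M[C]_d -> V} :=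
  HB.pack (fun Y => rho Y a x) (GRing.isLinear.Build _ _ _ _ _ (rho_linear_mx a x)).
rewrite -[rho X a x]/(F X) (matrix_sum_delta X) linear_sum.
apply: (big_ind (lower_span u)); [exact: lower_span0 | exact: lower_spanD |] => i _.
rewrite linear_sum.
apply: (big_ind (lower_span u)); [exact: lower_span0 | exact: lower_spanD |] => j _.
rewrite linearZ_LR; apply: lower_spanZ => /=.
case: (ltngtP i j) => [ij | ji | /val_inj ->].
- by rewrite (cartan_span_Vplus u_plus ux) //; apply: lower_span0.
- by apply: lower_span_rho ji _; apply: lower_span_cartan.
- by do 2!constructor.
Qed.

Lemma lower_span_submodule u : Vplus rho u -> submodule rho dop (lower_span u).
Proof.
move=> u_plus; split; first exact: lower_span0.
split; first by move=> c x y; apply: lower_span_lin.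
split=> [X a x ux | k x].
  elim: ux X a => {x} [x ux | i j b x ji _ IH | c x y _ IHx _ IHy] X a.
  - exact: lower_span_rho_cartan.
  - by rewrite rho_commutator; apply: lower_spanD; [apply: lower_span_rho | apply: IH].
  - by rewrite linearP /=; apply: lower_span_lin; [apply: IHx | apply: IHy].
elim=> {x} [x ux | i j b x ji ux IH | c x y _ IHx _ IHy].
- by do 2!constructor.
- rewrite dop_rho; apply: lower_spanD; first exact: lower_span_rho.
  exact/lower_spanZ/lower_span_rho.
- by rewrite linearP /=; apply: lower_span_lin.
Qed.

Lemma lower_span_full u : irreducible rho dop -> Vplus rho u -> u != 0 ->
  forall x, lower_span u x.
Proof.
move=> [_ irr] u_plus u_neq0; have [u_zero | //] := irr _ (lower_span_submodule u_plus).
by move: u_neq0; rewrite (u_zero u) ?eqxx //; do 2!constructor.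
Qed.

Section Depth.
Variable ys : seq C.

Definition deep (k : nat) (x : V) : Prop :=
  in_eigenspaces (rho hreg 0) (below ys k) x.

Lemma deep0 k : deep k 0.
Proof. exact: in_eigenspaces0. Qed.

Lemma deep_lin k c x y : deep k x -> deep k y -> deep k (c *: x + y).
Proof. exact: in_eigenspaces_lin. Qed.

Lemma deepW k x : deep k.+1 x -> deep k x.
Proof. by apply: in_eigenspacesW => f; apply: belowW. Qed.

Lemma deep_cartan_span k u x : deep k u -> cartan_span u x -> deep k x.
Proof.
move=> u_deep; elim=> {x} // [c x y _ ? _ ? | l b x _ x_deep | l x _ x_deep].
- exact: deep_lin.
- apply: in_eigenspaces_map x_deep => [f z | f]; first exact/rho_delta_eigen/hreg_diag.
  by rewrite subrr addr0.
- apply: (in_eigenspaces_map (g := id)) x_deep => // f z; exact: dop_eigen.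
Qed.

Lemma deep_lower (i j : 'I_d) b k x :
  (j < i)%N -> deep k x -> deep k.+1 (rho (delta_mx i j) b x).
Proof.
move=> ji; apply: in_eigenspaces_map => [f z | f]; first exact/rho_delta_eigen/hreg_diag.
rewrite hreg_root -opprB -natrB ?(ltnW ji) // => /(below_subn (i - j)).
by apply: belowW; rewrite -addn1 leq_add2l subn_gt0.
Qed.

Lemma deep_lower_span k u x : deep k u -> lower_span u x -> deep k x.
Proof.
move=> u_deep; elim=> {x} [x ux | i j b x ji _ x_deep | c x y _ ? _ ?].
- exact: deep_cartan_span ux.
- exact/deepW/deep_lower.
- exact: deep_lin.
Qed.

Lemma deep_all_eq0 x : eigensum (rho hreg 0) ys x -> (forall k, deep k x) -> x = 0.
Proof.
move=> x_ys x_deep; have [k k_notin] := below_eventually_notin ys.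
have [es x_es es_below] := x_deep k.
by apply: eigensum_disjoint x_es x_ys _ => f /es_below/k_notin.
Qed.

End Depth.

Section RadicalAction.
Variables (h : 'M[C]_d) (a : 'rV[int]_n).
Hypotheses (hq : qtorus_param q) (hh : in_hdot h) (ha : in_rad q a).

Lemma rho_rad_cartan_span u x : rho h a u = 0 -> cartan_span u x -> rho h a x = 0.
Proof.
move=> hu; elim=> {x} // [c x y _ hx _ hy | k b x _ hx | k x _ hx].
- by rewrite linearP /= hx hy scaler0 addr0.
- rewrite rho_diag_delta ?hh.1 // hx linear0 (qsigma_rad_sym hq b ha).
  by rewrite subrr scale0r addr0.
- by have := dop_rho k h a x; rewrite hx linear0 scaler0 addr0 => <-.
Qed.

Lemma deep_rho_rad ys k w x : deep ys k w -> rho h a w = 0 -> lower_span w x ->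
  deep ys k.+1 (rho h a x).
Proof.
move=> w_deep hw; elim=> {x} [x wx | i j b x ji wx hx | c x y _ hx _ hy].
- by rewrite (rho_rad_cartan_span hw wx); apply: deep0.
- rewrite rho_diag_delta ?hh.1 // addrC.
  apply: deep_lin; first exact: deep_lower ji (deep_lower_span w_deep wx).
  exact/deepW/deep_lower.
- by rewrite linearP /=; apply: deep_lin.
Qed.

Lemma deep_step ys k w v : irreducible rho dop ->
  Vplus rho w -> w != 0 -> rho h a w = 0 -> Vplus rho v -> rho h a v != 0 ->
  deep ys k w -> deep ys k.+1 w.
Proof.
move=> irr w_plus w_neq0 hw v_plus hv w_deep.
have hv_deep := deep_rho_rad w_deep hw (lower_span_full irr w_plus w_neq0 v).
have hv_plus := Vplus_rho_diag a hh.1 v_plus.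
exact: deep_lower_span hv_deep (lower_span_full irr hv_plus hv w).
Qed.

End RadicalAction.
End GlqModule.

Theorem lemma5p12 (R : realType) (n d : nat) (hn : (2 <= n)%N) (hd : (2 <= d)%N)
    (q : 'I_n -> 'I_n -> R[i]) (hq : qtorus_param q)
    (V : lmodType R[i])
    (rho : 'M[R[i]]_d -> 'rV[int]_n -> V -> V) (dop : 'I_n -> V -> V)
    (hmod : glq_module q rho dop)
    (hirr : irreducible rho dop)
    (hint : integrable_fd rho dop)
    (h : 'M[R[i]]_d) (hh : in_hdot h)
    (a : 'rV[int]_n) (ha : in_rad q a) :
  (exists v, Vplus rho v /\ rho h a v != 0) ->
  forall w : V, Vplus rho w -> w != 0 -> rho h a w != 0.
Proof.
move=> [v [v_plus hv]] w w_plus w_neq0; apply: contra_neq (w_neq0) => hw.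
have [ys w_ys] := integrable_eigensum hint (hreg_hdot _ (ltnW hd)) w.
apply: (deep_all_eq0 hmod w_ys) => k.
elim: k => [|k]; first by exists ys => // f /below_mem.
exact: (deep_step hmod hq hh ha hirr w_plus w_neq0 hw v_plus hv).
Qed.
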